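(* Under Friends Appreciation, in every partition $\pi$ that maximizes the egalitarian welfare, every agent $i$ with $|F_i|=f_{\min}$ satisfies $F_i\subseteq \pi(i)$, i.e., is in the same coalition as all of her friends.
   Context: A friends-and-enemies instance consists of a set of agents $\mathcal{N}=\{1,\dots,n\}$ and, for each agent $i$, a set of friends $F_i\subseteq \mathcal{N}\setminus\{i\}$; the enemies of $i$ are $E_i=\mathcal{N}\setminus(F_i\cup\{i\})$. An outcome is a partition $\pi$ of $\mathcal{N}$; $\pi(i)$ is the coalition containing $i$. Under Friends Appreciation, $u_i(C)=|C\cap F_i|-\frac{1}{n}|C\cap E_i|$ for $C\ni i$, $u_i(\pi)=u_i(\pi(i))$, and $\mathsf{ESW}(\pi)=\min_i u_i(\pi)$. Here $f_{\min}=\min_{i\in\mathcal{N}}|F_i|$. *)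

From HB Require Import structures.
From mathcomp Require Import all_boot all_order all_algebra.
Set Implicit Arguments. Unset Strict Implicit. Unset Printing Implicit Defensive.
Import Order.TTheory GRing.Theory Num.Theory.
Local Open Scope ring_scope.

Section FriendsEnemies.
Variable T : finType.
Variable F : T -> {set T}.

Definition enemies (i : T) : {set T} := ~: (F i :|: [set i]).

Definition fa_util (i : T) (C : {set T}) : rat :=
  (#|C :&: F i|)%:R - (#|C :&: enemies i|)%:R / (#|T|)%:R.

Definition fa_util_part (P : {set {set T}}) (i : T) : rat :=
  fa_util i (pblock P i).

(* ESW(pi) = min_i u_i(pi).  The fold starts from n = #|T|, which is a strict
   upper bound on every utility (u_i <= |F_i| <= n - 1), so for T nonempty this
   is exactly the minimum over agents. *)
Definition esw (P : {set {set T}}) : rat :=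
  \big[Num.min/(#|T|)%:R]_(i : T) fa_util_part P i.
End FriendsEnemies.

(* If a friend of i lies outside pi(i), then u_i(pi) <= f_min - 1, because the
   enemy penalty is nonnegative.  In the grand coalition every agent k has
   u_k = |F_k| - |E_k|/n > |F_k| - 1 >= f_min - 1, since |E_k| < n.  So pi
   would not maximize the egalitarian welfare. *)
From mathcomp Require Import all_boot all_order all_algebra.
From mathcomp Require Import lra.
Set Implicit Arguments. Unset Strict Implicit. Unset Printing Implicit Defensive.
Import Order.TTheory GRing.Theory Num.Theory.
Local Open Scope ring_scope.

Section FriendsAppreciation.
Variables (T : finType) (F : T -> {set T}).

Lemma fa_util_le_friends i (C : {set T}) : fa_util F i C <= (#|C :&: F i|)%:R.
Proof. by rewrite /fa_util lerBlDr lerDl divr_ge0 ?ler0n. Qed.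

Lemma fa_util_gt_friends i (C : {set T}) : (#|C :&: F i|)%:R - 1 < fa_util F i C.
Proof.
have i_enemy : i \notin enemies F i by rewrite !inE eqxx orbT.
have few_enemies : (#|C :&: enemies F i| < #|T|)%N.
  apply: leq_ltn_trans (subset_leq_card (subsetIr _ _)) _.
  rewrite -cardsT; apply: proper_card; rewrite properE subsetT /=.
  by apply/subsetPn; exists i; rewrite ?in_setT.
have n_gt0 : 0 < (#|T|)%:R :> rat by rewrite ltr0n (leq_ltn_trans _ few_enemies).
have : (#|C :&: enemies F i|)%:R / (#|T|)%:R < 1 :> rat.
  by rewrite ltr_pdivrMr // mul1r ltr_nat.
rewrite /fa_util; lra.
Qed.

Lemma fa_util_not_sub i (C : {set T}) :
  ~~ (F i \subset C) -> fa_util F i C <= (#|F i|)%:R - 1.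
Proof.
move=> notsub; apply: le_trans (fa_util_le_friends i C) _.
have : (#|C :&: F i| < #|F i|)%N.
  apply: proper_card; rewrite properE subsetIr /=.
  by apply: contra notsub => /subset_trans; apply; apply: subsetIl.
rewrite -(ler_nat rat) -addn1 natrD; lra.
Qed.

Lemma esw_le_util P i : esw F P <= fa_util_part F P i.
Proof. exact: bigmin_le. Qed.

Lemma esw_gt P x :
  x < (#|T|)%:R -> (forall i, x < fa_util_part F P i) -> x < esw F P.
Proof. by move=> x_lt x_lt_util; apply: lt_bigmin. Qed.

Definition grand_coalition : {set {set T}} := [set [set: T]].

Lemma partition_grand_coalition (i : T) : partition grand_coalition [set: T].
Proof.
rewrite /partition cover1 eqxx trivIset1 /= in_set1.
by apply/eqP => /setP /(_ i); rewrite !inE.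
Qed.

Lemma pblock_grand_coalition k : pblock grand_coalition k = [set: T].
Proof.
apply/eqP; rewrite -in_set1; apply: pblock_mem.
by rewrite cover1 inE.
Qed.

Lemma esw_grand_coalition_gt i :
  (forall j, #|F i| <= #|F j|)%N -> (#|F i|)%:R - 1 < esw F grand_coalition.
Proof.
move=> fmin; apply: esw_gt => [|k].
  have : (#|F i| <= #|T|)%N by rewrite max_card.
  rewrite -(ler_nat rat); lra.
rewrite /fa_util_part pblock_grand_coalition; apply: le_lt_trans (fa_util_gt_friends _ _).
by rewrite setTI lerB // ler_nat.
Qed.

End FriendsAppreciation.

Theorem corollary1 (T : finType) (F : T -> {set T})
    (hF : forall i : T, i \notin F i)
    (P : {set {set T}}) (hP : partition P [set: T])
    (hmax : forall Q : {set {set T}}, partition Q [set: T] -> esw F Q <= esw F P)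
    (i : T) (hi : forall j : T, (#|F i| <= #|F j|)%N) :
  F i \subset pblock P i.
Proof.
apply: contraT => notsub.
have esw_P_small : esw F P <= (#|F i|)%:R - 1.
  exact: le_trans (esw_le_util F P i) (fa_util_not_sub notsub).
have := lt_le_trans (esw_grand_coalition_gt hi) (hmax _ (partition_grand_coalition i)).
by rewrite ltNge esw_P_small.
Qed.
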